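(* Let $\mathbb{R}^n_s$ be $\mathbb{R}^n$ with a non-degenerate symmetric bilinear form of signature $(n-s,s)$, let $G\subset\mathrm{Iso}(\mathbb{R}^n_s)$ be a real Zariski-closed subgroup whose centralizer $L=\mathrm{Z}_{\mathrm{Iso}(\mathbb{R}^n_s)}(G)$ acts transitively on $\mathbb{R}^n$, and let $U$ be the unipotent radical of $L$; assume $U$ acts transitively on $\mathbb{R}^n$. For $p\in\mathbb{R}^n$ let $F_p=G.p$, let $U_p$ be the stabilizer of $p$ in $U$, and let $U_{F_p}=\{u\in U\mid u.F_p\subseteq F_p\}$. Then $U_{F_p}$ is an algebraic subgroup of $U$ acting transitively on $F_p$, and $U_p$ is a normal subgroup of $U_{F_p}$. *)

From HB Require Import structures.
From mathcomp Require Import all_boot all_order all_algebra.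
From mathcomp Require Import reals.
Set Implicit Arguments. Unset Strict Implicit. Unset Printing Implicit Defensive.
Import Order.TTheory GRing.Theory Num.Theory.
Local Open Scope ring_scope.

(* An affine map x |-> A x + b of R^n, represented by the pair (A, b).
   (Equivalently the (n+1)x(n+1) matrix [[A, b], [0, 1]].) *)
Definition aff (R : realType) (n : nat) := ('M[R]_n * 'cV[R]_n)%type.

Section Aff.
Variables (R : realType) (n : nat).

Definition amul (g h : aff R n) : aff R n := (g.1 *m h.1, g.1 *m h.2 + g.2).
Definition aone : aff R n := (1%:M, 0).
Definition ainv (g : aff R n) : aff R n := (invmx g.1, - (invmx g.1 *m g.2)).
Definition act (g : aff R n) (p : 'cV[R]_n) : 'cV[R]_n := g.1 *m p + g.2.

Definition gramJ (s : nat) : 'M[R]_n :=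
  diag_mx (\row_(i < n) (if (i < n - s)%N then 1 else -1)).

Definition Iso (s : nat) (g : aff R n) : Prop :=
  g.1^T *m gramJ s *m g.1 = gramJ s.

Inductive polyfun : (aff R n -> R) -> Prop :=
| pf_const (c : R) : polyfun (fun _ => c)
| pf_lin (i j : 'I_n) : polyfun (fun g => g.1 i j)
| pf_tr (i : 'I_n) : polyfun (fun g => g.2 i 0)
| pf_add f h : polyfun f -> polyfun h -> polyfun (fun g => f g + h g)
| pf_mul f h : polyfun f -> polyfun h -> polyfun (fun g => f g * h g).

Definition zariski_closed (S : aff R n -> Prop) : Prop :=
  exists P : (aff R n -> R) -> Prop,
    (forall f, P f -> polyfun f) /\
    (forall g, S g <-> (forall f, P f -> f g = 0)).

Definition subgroup_of (K H : aff R n -> Prop) : Prop :=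
  (forall g, H g -> K g) /\ H aone /\
  (forall g h, H g -> H h -> H (amul g h)) /\
  (forall g, H g -> H (ainv g)).

Definition algebraic_subgroup_of (K H : aff R n -> Prop) : Prop :=
  subgroup_of K H /\ zariski_closed H.

Definition normal_subgroup_of (K N : aff R n -> Prop) : Prop :=
  subgroup_of K N /\
  (forall k x, K k -> N x -> N (amul (amul k x) (ainv k))).

Definition centralizer (s : nat) (G : aff R n -> Prop) (g : aff R n) : Prop :=
  Iso s g /\ (forall h, G h -> amul g h = amul h g).

Definition unipotent (g : aff R n) : Prop := (g.1 - 1%:M) ^+ n = 0.

(* U is the unipotent radical of the algebraic group L: the largest
   Zariski-closed normal subgroup of L consisting of unipotent elements
   (in characteristic 0 unipotent algebraic groups are connected). *)
Definition unipotent_radical (L U : aff R n -> Prop) : Prop :=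
  normal_subgroup_of L U /\ zariski_closed U /\
  (forall u, U u -> unipotent u) /\
  (forall N, normal_subgroup_of L N -> zariski_closed N ->
     (forall x, N x -> unipotent x) -> forall x, N x -> U x).

Definition transitive_on (H : aff R n -> Prop) (F : 'cV[R]_n -> Prop) : Prop :=
  forall x y, F x -> F y -> exists h, H h /\ act h x = y.

Definition aorbit (H : aff R n -> Prop) (p : 'cV[R]_n) (x : 'cV[R]_n) : Prop :=
  exists h, H h /\ act h p = x.

End Aff.

From HB Require Import structures.
From mathcomp Require Import all_boot all_order all_algebra.
From mathcomp Require Import reals.
From Stdlib Require Import FunctionalExtensionality IndefiniteDescription.
Set Implicit Arguments. Unset Strict Implicit. Unset Printing Implicit Defensive.
Import Order.TTheory GRing.Theory Num.Theory.
Local Open Scope ring_scope.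

(* Since U commutes with G, an element u of U maps the orbit F = G.p into
   itself as soon as u.p lies in F; this makes U_F a group, transitive on F
   (because U is transitive on R^n), and it normalizes the stabilizer U_p.
   For algebraicity, pick v0, v_1, ..., v_n in U sending p to 0, e_1, ..., e_n.
   An affine map g commuting with them is recovered polynomially from y = g.p:
   its translation part is g.0 = v0.y and its j-th column is
   g.e_j - g.0 = v_j.y - v0.y. Writing Phi(y) for this map,
   U_F = {u in U | Phi(u.p) in G and Phi(u.p).p = u.p}, a Zariski-closed set. *)

Section PolynomialMaps.
Variables (R : realType) (n : nat).
Local Notation A := (aff R n).

Lemma polyfun_ext (f h : A -> R) : polyfun f -> f =1 h -> polyfun h.
Proof. by move=> pf /functional_extensionality <-. Qed.

Lemma polyfun_sum (I : Type) (r : seq I) (F : I -> A -> R) :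
  (forall i, polyfun (F i)) -> polyfun (fun g => \sum_(i <- r) F i g).
Proof.
move=> pF; elim: r => [|i r IHr].
  by apply: (polyfun_ext (pf_const _ 0)) => g; rewrite big_nil.
by apply: (polyfun_ext (pf_add (pF i) IHr)) => g; rewrite big_cons.
Qed.

Lemma polyfun_sub (f h : A -> R) :
  polyfun f -> polyfun h -> polyfun (fun g => f g - h g).
Proof.
move=> pf ph; apply: (polyfun_ext (pf_add pf (pf_mul (pf_const _ (-1)) ph))).
by move=> g; rewrite mulN1r.
Qed.

Definition polymap (Phi : A -> A) :=
  (forall i j, polyfun (fun g => (Phi g).1 i j)) /\
  (forall i, polyfun (fun g => (Phi g).2 i 0)).

Definition polyvec (y : A -> 'cV[R]_n) := forall i, polyfun (fun g => y g i 0).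

Lemma polymap_id : polymap id.
Proof. by split=> *; [apply: pf_lin | apply: pf_tr]. Qed.

Lemma polymap_const (a : A) : polymap (fun _ => a).
Proof. by split=> *; apply: pf_const. Qed.

Lemma polyvec_const (x : 'cV[R]_n) : polyvec (fun _ => x).
Proof. by move=> i; apply: pf_const. Qed.

Lemma polyvec_act (Phi : A -> A) (y : A -> 'cV[R]_n) :
  polymap Phi -> polyvec y -> polyvec (fun g => act (Phi g) (y g)).
Proof.
move=> [pPhi1 pPhi2] py i.
apply: (polyfun_ext (pf_add (polyfun_sum (index_enum _)
          (fun j => pf_mul (pPhi1 i j) (py j))) (pPhi2 i))).
by move=> g; rewrite /act !mxE.
Qed.

Lemma polyfun_comp (f : A -> R) (Phi : A -> A) :
  polyfun f -> polymap Phi -> polyfun (fun g => f (Phi g)).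
Proof.
move=> pf [pPhi1 pPhi2]; elim: pf => *;
  by [apply: pf_const | apply: pPhi1 | apply: pPhi2 | apply: pf_add | apply: pf_mul].
Qed.

Lemma zariski_closed_ext (S T : A -> Prop) :
  (forall g, S g <-> T g) -> zariski_closed S -> zariski_closed T.
Proof.
move=> eST [P [pP eS]]; exists P; split=> // g.
by split=> [/eST/eS | /eS/eST].
Qed.

Lemma zariski_closedI (S T : A -> Prop) :
  zariski_closed S -> zariski_closed T -> zariski_closed (fun g => S g /\ T g).
Proof.
move=> [P [pP eS]] [Q [pQ eT]]; exists (fun f => P f \/ Q f).
split=> [f [/pP | /pQ] // | g].
split=> [[/eS zP /eT zQ] f [/zP | /zQ] // | z].
by split; [apply/eS => f Pf | apply/eT => f Qf]; apply: z; [left | right].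
Qed.

Lemma zariski_closed_preimage (Phi : A -> A) (S : A -> Prop) :
  polymap Phi -> zariski_closed S -> zariski_closed (fun g => S (Phi g)).
Proof.
move=> pPhi [P [pP eS]].
exists (fun f => exists2 f', P f' & f = fun g => f' (Phi g)); split.
  by move=> _ [f' /pP pf' ->]; apply: polyfun_comp.
move=> g; split=> [/eS z _ [f' /z zf' ->] // | z].
by apply/eS => f' Pf'; apply: (z (fun g => f' (Phi g))); exists f'.
Qed.

Lemma zariski_closed_eq (y z : A -> 'cV[R]_n) :
  polyvec y -> polyvec z -> zariski_closed (fun g => y g = z g).
Proof.
move=> py pz; exists (fun f => exists i, f = fun g => y g i 0 - z g i 0); split.
  by move=> _ [i ->]; exact: polyfun_sub (py i) (pz i).
move=> g; split=> [eyz _ [i ->] | zg]; first by rewrite eyz subrr.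
apply/matrixP => i j; rewrite (ord1 j); apply/eqP; rewrite -subr_eq0; apply/eqP.
by apply: (zg (fun g => y g i 0 - z g i 0)); exists i.
Qed.

End PolynomialMaps.

Section AffineMaps.
Variables (R : realType) (n : nat).
Local Notation A := (aff R n).

Lemma act_amul (g h : A) x : act (amul g h) x = act g (act h x).
Proof. by rewrite /act /amul /= mulmxDr mulmxA addrA. Qed.

Lemma act_one x : act (aone R n) x = x.
Proof. by rewrite /act /aone /= mul1mx addr0. Qed.

Lemma act_invK (g : A) x : g.1 \in unitmx -> act (ainv g) (act g x) = x.
Proof. by move=> g_unit; rewrite /act /ainv /= mulmxDr mulKmx // addrK. Qed.

Lemma act_Kinv (g : A) x : g.1 \in unitmx -> act g (act (ainv g) x) = x.
Proof.
move=> g_unit; rewrite /act /ainv /= mulmxDr mulmxN !mulmxA mulmxV // !mul1mx.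
by rewrite addrNK.
Qed.

Lemma Iso_unitmx s (g : A) : Iso s g -> g.1 \in unitmx.
Proof.
rewrite /Iso => /(congr1 determinant); rewrite !det_mulmx det_tr => edet.
have detJ : \det (gramJ R n s) != 0.
  rewrite det_diag; apply/prodf_neq0 => i _; rewrite mxE.
  by case: ifP => _; rewrite ?oppr_eq0 oner_eq0.
rewrite unitmxE unitfE; apply: contra_neq detJ => det0.
by rewrite -edet det0 !mul0r.
Qed.

Lemma subgroup_of_weaken (K K' H : A -> Prop) :
  (forall g, K g -> K' g) -> subgroup_of K H -> subgroup_of K' H.
Proof. by move=> KK' [HK HG]; split=> // g /HK /KK'. Qed.

Lemma aorbit_refl (G : A -> Prop) p : G (aone R n) -> aorbit G p p.
Proof. by exists (aone R n); rewrite act_one. Qed.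

Definition setwise_stabilizer (H : A -> Prop) (F : 'cV[R]_n -> Prop) (u : A) :=
  H u /\ forall x, F x -> F (act u x).

Definition point_stabilizer (H : A -> Prop) (p : 'cV[R]_n) (u : A) :=
  H u /\ act u p = p.

Definition reconstruct (v0 : A) (v : 'I_n -> A) (y : 'cV[R]_n) : A :=
  (\matrix_(i, j) (act (v j) y i 0 - act v0 y i 0), act v0 y).

Lemma polymap_reconstruct v0 v (y : A -> 'cV[R]_n) :
  polyvec y -> polymap (fun g => reconstruct v0 v (y g)).
Proof.
move=> py; split=> [i j | i] /=; last exact: polyvec_act (polymap_const v0) py i.
apply: (polyfun_ext (polyfun_sub (polyvec_act (polymap_const (v j)) py i)
                                 (polyvec_act (polymap_const v0) py i))).
by move=> g; rewrite mxE.
Qed.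

Lemma reconstruct_act v0 v (g : A) p :
  act v0 p = 0 -> (forall j, act (v j) p = delta_mx j 0) ->
  amul v0 g = amul g v0 -> (forall j, amul (v j) g = amul g (v j)) ->
  reconstruct v0 v (act g p) = g.
Proof.
move=> v0p vp cv0 cv.
have gv0 : act v0 (act g p) = g.2 by rewrite -act_amul cv0 act_amul v0p /act mulmx0 add0r.
case: g cv0 cv gv0 => g1 g2 cv0 cv gv0; congr pair; rewrite /reconstruct gv0 //.
apply/matrixP => i j; rewrite mxE -act_amul cv act_amul vp /act /= -colE !mxE.
by rewrite addrK.
Qed.

End AffineMaps.

Section OrbitStabilizers.
Variables (R : realType) (n : nat) (G U : aff R n -> Prop).
Hypothesis G_group : subgroup_of (fun g => g.1 \in unitmx) G.
Hypothesis U_group : subgroup_of (fun g => g.1 \in unitmx) U.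
Hypothesis UG_comm : forall u g, U u -> G g -> amul u g = amul g u.
Variable p : 'cV[R]_n.
Local Notation F := (aorbit G p).
Local Notation UF := (setwise_stabilizer U F).

Lemma act_comm u g x : U u -> G g -> act u (act g x) = act g (act u x).
Proof. by move=> Uu Gg; rewrite -!act_amul UG_comm. Qed.

Lemma orbit_base : F p.
Proof. by case: G_group => _ [G1 _]; apply: aorbit_refl. Qed.

Lemma setwise_stabilizer_orbitP u : UF u <-> U u /\ F (act u p).
Proof.
split=> [[Uu stabF] | [Uu [h [Gh hp]]]]; first by split; last apply: stabF orbit_base.
split=> // _ [g [Gg <-]]; exists (amul g h).
have [_ [_ [GM _]]] := G_group.
by split; [apply: (GM) | rewrite act_amul hp -act_comm].
Qed.

Lemma setwise_stabilizer_group : subgroup_of U UF.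
Proof.
have [U_unit [U1 [UM UV]]] := U_group; have [G_unit [_ [_ GV]]] := G_group.
split; first by move=> u [].
split; first by split=> // x Fx; rewrite act_one.
split=> [u w [Uu stabu] [Uw stabw] | u /setwise_stabilizer_orbitP [Uu [h [Gh hp]]]].
  by split=> [|x Fx]; [apply: (UM) | rewrite act_amul; apply/stabu/stabw].
have [U'u G'h] := (UV u Uu, GV h Gh).
apply/setwise_stabilizer_orbitP; split=> //; exists (ainv h); split=> //.
rewrite -{2}(act_invK p (G_unit h Gh)) hp (act_comm _ U'u G'h) act_invK //.
exact: U_unit.
Qed.

Lemma setwise_stabilizer_transitive :
  transitive_on U (fun _ => True) -> transitive_on UF F.
Proof.
have [G_unit [_ [GM GV]]] := G_group.
move=> Utrans _ _ [g [Gg <-]] [h [Gh <-]].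
have [u [Uu ugh]] := Utrans (act g p) (act h p) I I.
exists u; split=> //; apply/setwise_stabilizer_orbitP; split=> //.
exists (amul (ainv g) h); split; first by apply: (GM) => //; apply: (GV).
rewrite act_amul -ugh -(act_comm _ Uu (GV g Gg)) act_invK //.
exact: G_unit.
Qed.

Lemma point_stabilizer_normal : normal_subgroup_of UF (point_stabilizer U p).
Proof.
have [U_unit [U1 [UM UV]]] := U_group.
have [_ [_ [_ UFV]]] := setwise_stabilizer_group.
split.
  split=> [u [Uu up] | ]; first by apply/setwise_stabilizer_orbitP; rewrite up; split=> //; apply: orbit_base.
  split; first by split=> //; rewrite act_one.
  split=> [u w [Uu up] [Uw wp] | u [Uu up]].
    by split; [apply: (UM) | rewrite act_amul wp].
  split; first exact: UV.
  by rewrite -{1}up act_invK //; apply: (U_unit).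
move=> k x UFk [Ux xp]; have [Uk _] := UFk.
split; first by apply: (UM); [apply: (UM) | apply: (UV)].
have /setwise_stabilizer_orbitP [_ [g [Gg gp]]] := UFV k UFk.
rewrite !act_amul -gp (act_comm _ Ux Gg) xp gp act_Kinv //.
exact: U_unit.
Qed.

Lemma setwise_stabilizer_zariski_closed :
  zariski_closed G -> zariski_closed U -> transitive_on U (fun _ => True) ->
  zariski_closed UF.
Proof.
move=> Gclosed Uclosed Utrans.
have [v0 [Uv0 v0p]] := Utrans p 0 I I.
have [v vp] := functional_choice (fun j w => U w /\ act w p = delta_mx j 0)
                                 (fun j => Utrans p (delta_mx j 0) I I).
pose Phi u := reconstruct v0 v (act u p).
have pact : polyvec (fun u : aff R n => act u p).
  exact: polyvec_act (@polymap_id R n) (polyvec_const p).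
have pPhi : polymap Phi by apply: polymap_reconstruct.
have PhiG g : G g -> Phi g = g.
  move=> Gg; apply: reconstruct_act => // [j | | j]; first by case: (vp j).
    exact: UG_comm.
  by apply: (UG_comm); case: (vp j).
apply: (@zariski_closed_ext _ _
  (fun u => (U u /\ G (Phi u)) /\ act (Phi u) p = act u p)); last first.
  apply: zariski_closedI; first exact: zariski_closedI (zariski_closed_preimage pPhi Gclosed).
  exact: zariski_closed_eq (polyvec_act pPhi (polyvec_const p)) pact.
move=> u; rewrite setwise_stabilizer_orbitP; split=> [[[Uu GPhi] ep] | [Uu [g [Gg gp]]]].
  by split=> //; exists (Phi u).
have ePhi : Phi u = g by rewrite /Phi -gp; exact: PhiG.
by rewrite ePhi gp.
Qed.

End OrbitStabilizers.

Theorem proposition6p6 (R : realType) (n s : nat) (hs : (s <= n)%N)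
  (G U : aff R n -> Prop) :
  subgroup_of (Iso s) G -> zariski_closed G ->
  transitive_on (centralizer s G) (fun _ => True) ->
  unipotent_radical (centralizer s G) U ->
  transitive_on U (fun _ => True) ->
  forall p : 'cV[R]_n,
    let F := aorbit G p in
    let Up := fun u => U u /\ act u p = p in
    let UF := fun u => U u /\ (forall x, F x -> F (act u x)) in
    [/\ algebraic_subgroup_of U UF,
        transitive_on UF F &
        normal_subgroup_of UF Up].
Proof.
move=> G_Iso Gclosed _ [[U_L _] [Uclosed _]] Utrans p F Up UF.
have G_group := subgroup_of_weaken (@Iso_unitmx R n s) G_Iso.
have U_group : subgroup_of (fun g : aff R n => g.1 \in unitmx) U.
  by apply: subgroup_of_weaken U_L => g [/Iso_unitmx].
have UG_comm u g : U u -> G g -> amul u g = amul g u.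
  by move=> /U_L.1 [_ cu] /cu.
split; first split.
- exact: setwise_stabilizer_group.
- exact: setwise_stabilizer_zariski_closed.
- exact: setwise_stabilizer_transitive.
- exact: point_stabilizer_normal.
Qed.
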